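(* Let $f,h:\mathbb{R}^d\to\mathbb{R}$ be Lipschitz with constants $L_f,L_h$, $a,b>0$, and $\widetilde Q=\{(x,s,t):h(x)\le as,\ f(x)+as\le bt\}$. Let $q\in\mathbb{R}^{d+2}$, $p_{k-1}\in\widetilde Q$, $r_{\mathrm{loc}}=\|p_{k-1}-q\|$, and let $p_*$ be a minimizer of $\|p-q\|$ over $\widetilde Q\cap\{p:\|p-q\|\le 2r_{\mathrm{loc}}\}$. Fix $c>1$ and set $\widetilde Q_{\mathrm{loc}}(c)=\widetilde Q\cap\{p:\|p-q\|\le cr_{\mathrm{loc}}\}$, $\widetilde C_h=\sqrt{L_h^2+a^2}$, $\widetilde C_f=\sqrt{L_f^2+a^2+b^2}$, $\mu=\min\{a/\widetilde C_h,\ b/\widetilde C_f\}$, $\lambda=2+a/b$, $\kappa=\frac{c-1}{\lambda+\mu}$, and $\bar p=p_*+(0,\Delta s,\frac ab\Delta s+\Delta t)$ with $\Delta s=\Delta t=\kappa r_{\mathrm{loc}}$ (here $0\in\mathbb{R}^d$). Then the closed ball of center $\bar p$ and radius $\kappa\mu r_{\mathrm{loc}}$ is contained in $\widetilde Q_{\mathrm{loc}}(c)$. In particular, $\mathrm{minwidth}(\widetilde Q_{\mathrm{loc}}(c))\ge2\kappa\mu r_{\mathrm{loc}}$ and $$\gamma(c):=\frac{cr_{\mathrm{loc}}}{\mathrm{minwidth}(\widetilde Q_{\mathrm{loc}}(c))}\le\frac{c(\lambda+\mu)}{(c-1)\mu}.$$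
   Context: $\mathrm{minwidth}(S)=\min_{\|w\|=1}(\max_{y\in S}w^\top y-\min_{y\in S}w^\top y)$. *)

From mathcomp Require Import all_boot all_order all_algebra.
From mathcomp Require Import all_classical all_reals.
Set Implicit Arguments. Unset Strict Implicit. Unset Printing Implicit Defensive.
Import Order.TTheory GRing.Theory Num.Theory.
Local Open Scope ring_scope.
Local Open Scope classical_set_scope.

(* A point of R^{d+2} is a triple (x, s, t) with x : R^d (= 'I_d -> R). *)
Definition pt (R : realType) (d : nat) : Type := (('I_d -> R) * R * R)%type.

Definition normd (R : realType) (d : nat) (x : 'I_d -> R) : R :=
  Num.sqrt (\sum_(i < d) x i ^+ 2).

Definition lipschitz (R : realType) (d : nat) (f : ('I_d -> R) -> R) (L : R) :=
  0 <= L /\ forall x y : 'I_d -> R, `|f x - f y| <= L * normd (fun i => x i - y i).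

Definition dotp (R : realType) (d : nat) (u v : pt R d) : R :=
  \sum_(i < d) u.1.1 i * v.1.1 i + u.1.2 * v.1.2 + u.2 * v.2.

Definition subp (R : realType) (d : nat) (u v : pt R d) : pt R d :=
  ((fun i => u.1.1 i - v.1.1 i), u.1.2 - v.1.2, u.2 - v.2).

Definition normp (R : realType) (d : nat) (u : pt R d) : R := Num.sqrt (dotp u u).

Definition distp (R : realType) (d : nat) (u v : pt R d) : R := normp (subp u v).

Definition Qt (R : realType) (d : nat) (f h : ('I_d -> R) -> R) (a b : R)
  : set (pt R d) :=
  [set p | h p.1.1 <= a * p.1.2 /\ f p.1.1 + a * p.1.2 <= b * p.2].

Definition cball (R : realType) (d : nat) (q : pt R d) (r : R) : set (pt R d) :=
  [set p | distp p q <= r].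

Definition width (R : realType) (d : nat) (S : set (pt R d)) (w : pt R d) : R :=
  sup [set dotp w y | y in S] - inf [set dotp w y | y in S].

Definition minwidth (R : realType) (d : nat) (S : set (pt R d)) : R :=
  inf [set width S w | w in [set w : pt R d | normp w = 1]].

(* Moving the nearest point [pst] by [ds] in [s] and by [a/b ds + dt] in [t]
   creates slack [a ds] and [b dt] in the two constraints of [Qt].  The
   constraint functions (x, s, t) |-> h x - a s and f x + a s - b t are
   Lipschitz with constants [Ch] and [Cf], so the ball of radius
   [kappa mu rloc] around the moved point [pbar] stays in [Qt]; as [pst] lies
   within [rloc] of [q] and is moved by at most [lam ds], the triangle
   inequality keeps that ball within [c rloc] of [q].  A bounded set containing
   a ball of radius rho has width at least 2 rho in every unit direction. *)

From mathcomp Require Import all_boot all_order all_algebra.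
From mathcomp Require Import all_classical all_reals.
From mathcomp Require Import lra ring.
Import Order.TTheory GRing.Theory Num.Theory.
Local Open Scope ring_scope.
Local Open Scope classical_set_scope.

Section EuclideanGeometry.
Context {R : realType} {d : nat}.
Implicit Types (u v w : pt R d) (t : R).

Definition addpZ u t v : pt R d :=
  ((fun i => u.1.1 i + t * v.1.1 i), u.1.2 + t * v.1.2, u.2 + t * v.2).

Lemma pt_eq u v : u.1.1 =1 v.1.1 -> u.1.2 = v.1.2 -> u.2 = v.2 -> u = v.
Proof. by case: u v => [[x s] r] [[x' s'] r'] /= /boolp.funext -> -> ->. Qed.

Lemma dotp_ge0 u : 0 <= dotp u u.
Proof. by rewrite /dotp !addr_ge0 ?sumr_ge0 // => *; rewrite -expr2 sqr_ge0. Qed.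

Lemma normp_ge0 u : 0 <= normp u.
Proof. exact: sqrtr_ge0. Qed.

Lemma sqr_normp u : normp u ^+ 2 = dotp u u.
Proof. exact/sqr_sqrtr/dotp_ge0. Qed.

Lemma dotpC u v : dotp u v = dotp v u.
Proof.
rewrite /dotp (eq_bigr (fun i => v.1.1 i * u.1.1 i)) => [|i _]; last exact: mulrC.
by rewrite [u.1.2 * _]mulrC [u.2 * _]mulrC.
Qed.

Lemma dotp_addpZr w u t v : dotp w (addpZ u t v) = dotp w u + t * dotp w v.
Proof.
rewrite /dotp /= (eq_bigr (fun i => w.1.1 i * u.1.1 i + t * (w.1.1 i * v.1.1 i))).
  by rewrite big_split /= -mulr_sumr; ring.
by move=> i _; ring.
Qed.

Lemma dotp_addpZ u t v :
  dotp (addpZ u t v) (addpZ u t v) = dotp u u + 2 * t * dotp u v + t ^+ 2 * dotp v v.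
Proof.
by rewrite dotp_addpZr (dotpC _ u) (dotpC _ v) !dotp_addpZr (dotpC v u); ring.
Qed.

Lemma dotp_subp_addpZ u t v : dotp (subp (addpZ u t v) u) (subp (addpZ u t v) u) =
  t ^+ 2 * dotp v v.
Proof.
rewrite /dotp /= (eq_bigr (fun i => t ^+ 2 * (v.1.1 i * v.1.1 i))).
  by rewrite -mulr_sumr; ring.
by move=> i _; ring.
Qed.

Lemma dotp_normd u : dotp u u = normd u.1.1 ^+ 2 + u.1.2 ^+ 2 + u.2 ^+ 2.
Proof. by rewrite /normd sqr_sqrtr ?sumr_ge0 // => *; rewrite sqr_ge0. Qed.

(* Evaluate the nonnegative quadratic [t |-> |u + t v|^2] at its minimum, or,
   when [v] is null, at a point where its affine part is negative. *)
Lemma dotp_sqr_le u v : dotp u v ^+ 2 <= dotp u u * dotp v v.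
Proof.
have nonneg t : 0 <= dotp u u + 2 * t * dotp u v + t ^+ 2 * dotp v v.
  by rewrite -dotp_addpZ dotp_ge0.
have [vv_gt0|] := ltrP 0 (dotp v v).
  have := nonneg (- dotp u v / dotp v v).
  rewrite -(pmulr_rge0 _ vv_gt0).
  have -> : dotp v v * (dotp u u + 2 * (- dotp u v / dotp v v) * dotp u v +
      (- dotp u v / dotp v v) ^+ 2 * dotp v v) = dotp u u * dotp v v - dotp u v ^+ 2.
    by field; rewrite gt_eqF.
  by rewrite subr_ge0.
rewrite le_eqVlt ltNge dotp_ge0 orbF => /eqP vv0.
suff -> : dotp u v = 0 by rewrite vv0 expr0n mulr0.
apply/eqP; apply: contraT => uv_neq0.
have := nonneg (- (dotp u u + 1) / (2 * dotp u v)); rewrite vv0 mulr0 addr0.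
have -> : 2 * (- (dotp u u + 1) / (2 * dotp u v)) * dotp u v = - (dotp u u + 1).
  by field.
lra.
Qed.

Lemma ler_abs_dotp u v : `|dotp u v| <= normp u * normp v.
Proof.
by rewrite -ler_sqr ?nnegrE ?mulr_ge0 ?normp_ge0 // real_normK ?num_real //
  exprMn !sqr_normp dotp_sqr_le.
Qed.

Lemma normp_triangle u v : normp (addpZ u 1 v) <= normp u + normp v.
Proof.
rewrite -ler_sqr ?nnegrE ?addr_ge0 ?normp_ge0 // sqr_normp dotp_addpZ.
have := ler_abs_dotp u v; rewrite -(sqr_normp u) -(sqr_normp v).
have := ler_norm (dotp u v); lra.
Qed.

Lemma distp_triangle u v w : distp u w <= distp u v + distp v w.
Proof.
rewrite /distp; have -> : subp u w = addpZ (subp u v) 1 (subp v w).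
  by apply: pt_eq => /= [i||]; ring.
exact: normp_triangle.
Qed.

Lemma normp_le_distp u v : normp u <= distp u v + normp v.
Proof.
rewrite /distp; have {1}-> : u = addpZ (subp u v) 1 v.
  by apply: pt_eq => /= [i||]; ring.
exact: normp_triangle.
Qed.

Lemma distp_addpZ u t v : distp (addpZ u t v) u = `|t| * normp v.
Proof.
by rewrite /distp /normp dotp_subp_addpZ sqrtrM ?sqr_ge0 // sqrtr_sqr.
Qed.

Lemma distp_shift u ds dt : distp (u.1.1, u.1.2 + ds, u.2 + dt) u <= `|ds| + `|dt|.
Proof.
rewrite -ler_sqr ?nnegrE ?addr_ge0 ?normp_ge0 // sqr_normp dotp_normd /=.
rewrite /normd big1 => [|i _]; last by rewrite subrr expr0n.
rewrite sqrtr0 expr0n add0r (addrAC u.1.2) (addrAC u.2) !subrr !add0r.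
rewrite -(real_normK (num_real ds)) -(real_normK (num_real dt)).
have := normr_ge0 ds; have := normr_ge0 dt; nra.
Qed.

Lemma cball_shift_sub_cball u q ds dt rho r : distp u q <= r ->
  cball (u.1.1, u.1.2 + ds, u.2 + dt) rho `<=` cball q (rho + (`|ds| + `|dt|) + r).
Proof.
move=> uq y; rewrite /cball /= => y_near.
have := distp_shift u ds dt; have := distp_triangle y (u.1.1, u.1.2 + ds, u.2 + dt) q.
have := distp_triangle (u.1.1, u.1.2 + ds, u.2 + dt) u q; lra.
Qed.

End EuclideanGeometry.

Lemma dot3_le_sqrt {R : realType} (a1 a2 a3 x1 x2 x3 : R) :
  a1 * x1 + a2 * x2 + a3 * x3 <=
  Num.sqrt (a1 ^+ 2 + a2 ^+ 2 + a3 ^+ 2) * Num.sqrt (x1 ^+ 2 + x2 ^+ 2 + x3 ^+ 2).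
Proof.
rewrite -sqrtrM ?addr_ge0 ?sqr_ge0 //.
apply: le_trans (ler_norm _) _; rewrite -sqrtr_sqr ler_wsqrtr // -subr_ge0.
(* Lagrange's identity *)
have -> : (a1 ^+ 2 + a2 ^+ 2 + a3 ^+ 2) * (x1 ^+ 2 + x2 ^+ 2 + x3 ^+ 2) -
    (a1 * x1 + a2 * x2 + a3 * x3) ^+ 2 =
    (a1 * x2 - a2 * x1) ^+ 2 + (a1 * x3 - a3 * x1) ^+ 2 + (a2 * x3 - a3 * x2) ^+ 2.
  by ring.
by rewrite !addr_ge0 ?sqr_ge0.
Qed.

Lemma lipschitz_le {R : realType} {d : nat} {f : ('I_d -> R) -> R} {L : R} x y :
  lipschitz f L -> f x - f y <= L * normd (fun i => x i - y i).
Proof. by case=> _ /(_ x y); apply: le_trans; rewrite ler_norm. Qed.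

Section ShiftedBall.
Context {R : realType} {d : nat} {f h : ('I_d -> R) -> R} {Lf Lh a b : R}.
Hypotheses (lip_f : lipschitz f Lf) (lip_h : lipschitz h Lh).

Lemma cball_shift_sub_Qt (p : pt R d) (ds dt rho : R) :
  Qt f h a b p ->
  Num.sqrt (Lh ^+ 2 + a ^+ 2) * rho <= a * ds ->
  Num.sqrt (Lf ^+ 2 + a ^+ 2 + b ^+ 2) * rho <= b * dt - a * ds ->
  cball (p.1.1, p.1.2 + ds, p.2 + dt) rho `<=` Qt f h a b.
Proof.
case=> Qh Qf rho_h rho_f y; rewrite /cball /= /distp /normp dotp_normd /=.
set n := normd _; set es := y.1.2 - _; set et := y.2 - _ => y_near.
have sh := dot3_le_sqrt Lh (- a) 0 n es et.
have sf := dot3_le_sqrt Lf a (- b) n es et.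
rewrite sqrrN expr0n addr0 in sh; rewrite sqrrN in sf.
have /(ler_wpM2l (sqrtr_ge0 (Lh ^+ 2 + a ^+ 2))) nh := y_near.
have /(ler_wpM2l (sqrtr_ge0 (Lf ^+ 2 + a ^+ 2 + b ^+ 2))) nf := y_near.
have lh := lipschitz_le y.1.1 p.1.1 lip_h.
have lf := lipschitz_le y.1.1 p.1.1 lip_f.
rewrite -/n in lh lf; split; rewrite /es /et in sh sf; lra.
Qed.

End ShiftedBall.

Section MinWidth.
Context {R : realType} {d : nat}.
Implicit Types (S : set (pt R d)) (p q w : pt R d) (rho r : R).

Lemma width_ge_cball S p q w rho r :
  normp w = 1 -> 0 <= rho -> cball p rho `<=` S -> S `<=` cball q r ->
  2 * rho <= width S w.
Proof.
move=> w1 rho0 pS Sq; set M := r + normp q.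
have wS_bounded y : S y -> `|dotp w y| <= M.
  move=> /Sq yq; apply: le_trans (ler_abs_dotp w y) _.
  by rewrite w1 mul1r; apply: le_trans (normp_le_distp y q) _; rewrite lerD2r.
have ub : has_ubound [set dotp w y | y in S].
  by exists M => _ [y /wS_bounded + <-]; apply: le_trans; rewrite ler_norm.
have lb : has_lbound [set dotp w y | y in S].
  by exists (- M) => _ [y /wS_bounded + <-]; rewrite lerNl; apply: le_trans;
    rewrite -normrN ler_norm.
have in_S t : `|t| = rho -> S (addpZ p t w).
  by move=> t_rho; apply: pS; rewrite /cball /= distp_addpZ w1 mulr1 t_rho.
have S_rho := ub_le_sup ub (ex_intro2 _ _ _ (in_S rho (ger0_norm rho0)) erefl).
have S_Nrho := ge_inf lb
  (ex_intro2 _ _ _ (in_S (- rho) (etrans (normrN _) (ger0_norm rho0))) erefl).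
have ww : dotp w w = 1 by rewrite -sqr_normp w1 expr1n.
rewrite !dotp_addpZr ww in S_rho S_Nrho; rewrite /width; lra.
Qed.

Lemma minwidth_ge_cball S p q rho r :
  0 <= rho -> cball p rho `<=` S -> S `<=` cball q r -> 2 * rho <= minwidth S.
Proof.
move=> rho0 pS Sq; apply: lb_le_inf => [|_ [w /= w1 <-]].
  pose e1 : pt R d := (fun _ => 0, 1, 0).
  exists (width S e1), e1 => //.
  by rewrite /normp /dotp /= big1 ?mul0r // mulr1 add0r addr0 sqrtr1.
exact: width_ge_cball w1 rho0 pS Sq.
Qed.

End MinWidth.

Lemma ler_div_of_ler_mul {R : realType} (x w k : R) :
  0 <= x -> 0 < k -> k * x <= w -> x / w <= k^-1.
Proof.
rewrite le_eqVlt => /predU1P[<- k_gt0 _|x_gt0 k_gt0 kxw].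
  by rewrite mul0r invr_ge0 ltW.
have w_gt0 : 0 < w by apply: lt_le_trans kxw; rewrite mulr_gt0.
by rewrite ler_pdivrMr // ler_pdivlMl.
Qed.

Section Constants.
Context {R : realType} {Lf Lh a b c : R}.
Hypotheses (a_gt0 : 0 < a) (b_gt0 : 0 < b) (c_gt1 : 1 < c).

Let Ch := Num.sqrt (Lh ^+ 2 + a ^+ 2).
Let Cf := Num.sqrt (Lf ^+ 2 + a ^+ 2 + b ^+ 2).
Let mu := Num.min (a / Ch) (b / Cf).
Let lam := 2 + a / b.
Let kappa := (c - 1) / (lam + mu).

Let Ch_gt0 : 0 < Ch.
Proof. by rewrite sqrtr_gt0 ltr_wpDl ?sqr_ge0 ?exprn_gt0. Qed.

Let Cf_gt0 : 0 < Cf.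
Proof. by rewrite sqrtr_gt0 ltr_wpDl ?addr_ge0 ?sqr_ge0 ?exprn_gt0. Qed.

Lemma Ch_mu_le : Ch * mu <= a.
Proof. by rewrite mulrC -ler_pdivlMr // ge_min lexx. Qed.

Lemma Cf_mu_le : Cf * mu <= b.
Proof. by rewrite mulrC -ler_pdivlMr // ge_min lexx orbT. Qed.

Lemma mu_gt0 : 0 < mu.
Proof. by rewrite lt_min !divr_gt0. Qed.

Let lam_mu_gt0 : 0 < lam + mu.
Proof. by rewrite addr_gt0 ?mu_gt0 // addr_gt0 // divr_gt0. Qed.

Lemma kappa_gt0 : 0 < kappa.
Proof. by rewrite divr_gt0 // subr_gt0. Qed.

Lemma kappa_lam_mu : kappa * (lam + mu) = c - 1.
Proof. by rewrite mulfVK ?gt_eqF. Qed.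

(* In fact [c rloc / w <= c / (2 kappa mu)], half the claimed bound. *)
Lemma gamma_le rloc w : 0 <= rloc -> 2 * kappa * mu * rloc <= w ->
  c * rloc / w <= c * (lam + mu) / ((c - 1) * mu).
Proof.
move=> rloc_ge0 width_ge.
have c_gt0 : 0 < c by apply: lt_trans c_gt1.
have k_gt0 : 0 < 2 * kappa * mu / c.
  by rewrite divr_gt0 // mulr_gt0 ?mu_gt0 // mulr_gt0 ?kappa_gt0.
apply: le_trans (ler_div_of_ler_mul _ _ _ _ k_gt0 _) _.
- by rewrite mulr_ge0 // ltW.
- by rewrite mulrA divfK ?gt_eqF.
have -> : (2 * kappa * mu / c)^-1 = c * (lam + mu) / ((c - 1) * mu) / 2.
  by rewrite /kappa; field; rewrite !gt_eqF ?mu_gt0 // subr_gt0.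
have : 0 < c * (lam + mu) / ((c - 1) * mu).
  by rewrite divr_gt0 ?mulr_gt0 ?mu_gt0 // subr_gt0.
lra.
Qed.

End Constants.

Theorem lemma27 (R : realType) (d : nat) (f h : ('I_d -> R) -> R)
  (Lf Lh a b : R) (q pk1 pst : pt R d) (c : R) :
  lipschitz f Lf -> lipschitz h Lh -> 0 < a -> 0 < b ->
  Qt f h a b pk1 ->
  let rloc := distp pk1 q in
  (Qt f h a b `&` cball q (2 * rloc)) pst ->
  (forall p, (Qt f h a b `&` cball q (2 * rloc)) p -> distp pst q <= distp p q) ->
  1 < c ->
  let Qloc := Qt f h a b `&` cball q (c * rloc) in
  let Ch := Num.sqrt (Lh ^+ 2 + a ^+ 2) in
  let Cf := Num.sqrt (Lf ^+ 2 + a ^+ 2 + b ^+ 2) in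
  let mu := Num.min (a / Ch) (b / Cf) in
  let lam := 2 + a / b in
  let kappa := (c - 1) / (lam + mu) in
  let ds := kappa * rloc in
  let dt := kappa * rloc in
  let pbar : pt R d := (pst.1.1, pst.1.2 + ds, pst.2 + a / b * ds + dt) in
  cball pbar (kappa * mu * rloc) `<=` Qloc /\
  2 * kappa * mu * rloc <= minwidth Qloc /\
  c * rloc / minwidth Qloc <= c * (lam + mu) / ((c - 1) * mu).
Proof.
move=> lip_f lip_h a_gt0 b_gt0 Qk1 rloc [Qst _] st_min c_gt1 Qloc Ch Cf mu lam
  kappa ds dt pbar.
have rloc_ge0 : 0 <= rloc by exact: normp_ge0.
have st_rloc : distp pst q <= rloc.
  by apply: st_min; split; rewrite // /cball /= -/rloc; lra.
have k_gt0 : 0 < kappa by exact: kappa_gt0.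
have m_gt0 : 0 < mu by exact: mu_gt0.
have kappaE : kappa * (lam + mu) = c - 1 by exact: kappa_lam_mu.
have ds_ge0 : 0 <= ds by rewrite mulr_ge0 // ltW.
have dt'_ge0 : 0 <= a / b * ds + dt by rewrite addr_ge0 // mulr_ge0 // divr_ge0 // ltW.
have rhoE C : C * (kappa * mu * rloc) = C * mu * ds by rewrite /ds; ring.
have pbarE : pbar = (pst.1.1, pst.1.2 + ds, pst.2 + (a / b * ds + dt)) by rewrite addrA.
have ball_Q : cball pbar (kappa * mu * rloc) `<=` Qt f h a b.
  rewrite pbarE; apply: (cball_shift_sub_Qt lip_f lip_h pst) => //.
    by rewrite rhoE ler_wpM2r // Ch_mu_le.
  have -> : b * (a / b * ds + dt) - a * ds = b * ds.
    by rewrite /dt /ds; field; rewrite gt_eqF.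
  by rewrite rhoE ler_wpM2r // Cf_mu_le.
have ball_loc : cball pbar (kappa * mu * rloc) `<=` Qloc.
  have radiusE : kappa * mu * rloc + (`|ds| + `|a / b * ds + dt|) + rloc = c * rloc.
    by rewrite !ger0_norm // -(subrK 1 c) -kappaE /ds /dt /lam; ring.
  move=> y y_near; split; first exact: ball_Q.
  by rewrite -radiusE; apply: cball_shift_sub_cball st_rloc _ _; rewrite -pbarE.
have width_loc : 2 * kappa * mu * rloc <= minwidth Qloc.
  have -> : 2 * kappa * mu * rloc = 2 * (kappa * mu * rloc) by rewrite !mulrA.
  apply: (minwidth_ge_cball _ _ q _ (c * rloc) _ ball_loc).
    by rewrite mulr_ge0 // mulr_ge0 // ltW.
  by move=> y [].
by do 2!split => //; apply: gamma_le.
Qed.
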